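(* Let $(X,d)$ be a complete metric space and let $T\colon X\to X$ satisfy (CM): for all $x,y\in X$, $x\neq y$ implies $d(Tx,Ty)<\frac{1}{2}\{d(x,Tx)+d(y,Ty)\}$. Then the following are equivalent: (i) for every $x\in X$ and every $\varepsilon>0$ there exists $\delta>0$ such that for all $i,j\in\mathbb{N}\cup\{0\}$, $\frac{1}{2}\{d(T^ix,T^{i+1}x)+d(T^jx,T^{j+1}x)\}<\varepsilon+\delta$ implies $d(T^{i+1}x,T^{j+1}x)\le\varepsilon$; (ii) $T$ has a unique fixed point $z\in X$ and the sequence $(T^nx)_{n}$ converges to $z$ for every $x\in X$.
   Context: $T^n$ denotes the $n$-fold composition of $T$, with $T^0$ the identity; $\mathbb{N}=\{1,2,3,\dots\}$. *)

From Stdlib Require Import Reals.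
Open Scope R_scope.

Definition is_metric {X : Type} (d : X -> X -> R) : Prop :=
  (forall x y, 0 <= d x y) /\
  (forall x y, d x y = 0 <-> x = y) /\
  (forall x y, d x y = d y x) /\
  (forall x y z, d x z <= d x y + d y z).

Definition seq_cv {X : Type} (d : X -> X -> R) (u : nat -> X) (l : X) : Prop :=
  forall eps, 0 < eps -> exists N : nat, forall n, (N <= n)%nat -> d (u n) l < eps.

Definition cauchy_seq {X : Type} (d : X -> X -> R) (u : nat -> X) : Prop :=
  forall eps, 0 < eps -> exists N : nat, forall m n,
    (N <= m)%nat -> (N <= n)%nat -> d (u m) (u n) < eps.

Definition complete_metric {X : Type} (d : X -> X -> R) : Prop :=
  forall u : nat -> X, cauchy_seq d u -> exists l, seq_cv d u l.

Definition iterate {X : Type} (T : X -> X) (n : nat) (x : X) : X := Nat.iter n T x.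

From Stdlib Require Import Reals Lra Lia Classical.
Open Scope R_scope.

(* Under (CM) the displacements d(T^n x, T^(n+1) x) never increase, and strictly
   decrease while positive.  Given (i), their limit must be 0: otherwise (i) with
   eps equal to that limit, applied to two consecutive indices, pins a displacement
   to the limit and the next one drops below it.  Then (i) makes the orbit Cauchy,
   and (CM) forces its limit to be a fixed point, which (CM) also makes unique.
   Conversely, if the orbit tends to a fixed point z, (CM) gives
   d(T^(n+1) x, z) <= d(T^n x, T^(n+1) x) / 2, strictly unless the left side is 0,
   and both sides tend to 0.  A pair (i, j) violating
   d(T^(i+1) x, z) + d(T^(j+1) x, z) <= eps then has a positive gap between the
   average displacement and eps; violating pairs are finitely many apart from those
   through an index i with d(T^(i+1) x, z) >= eps, which share the gap computed at i,
   so the minimum of finitely many gaps is a valid delta. *)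

Definition vanishing (u : nat -> R) : Prop :=
  forall g, 0 < g -> exists N : nat, forall n, (N <= n)%nat -> u n < g.

Lemma vanishing_le (u v : nat -> R) :
  (forall n, u n <= v n) -> vanishing v -> vanishing u.
Proof.
  intros Huv Hv g Hg; destruct (Hv g Hg) as [N HN].
  exists N; intros n Hn; specialize (HN n Hn); specialize (Huv n); lra.
Qed.

Lemma vanishing_add (u v : nat -> R) :
  vanishing u -> vanishing v -> vanishing (fun n => u n + v n).
Proof.
  intros Hu Hv g Hg.
  destruct (Hu (g / 2)) as [N1 HN1]; [lra|]; destruct (Hv (g / 2)) as [N2 HN2]; [lra|].
  exists (max N1 N2); intros n Hn.
  specialize (HN1 n ltac:(lia)); specialize (HN2 n ltac:(lia)); lra.
Qed.

Lemma vanishing_shift (u : nat -> R) : vanishing u -> vanishing (fun n => u (S n)).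
Proof.
  intros Hu g Hg; destruct (Hu g Hg) as [N HN]; exists N; intros n Hn; apply HN; lia.
Qed.

Lemma vanishing_lower_bound (u : nat -> R) (c : R) :
  vanishing u -> (forall n, c <= u n) -> c <= 0.
Proof.
  intros Hu Hc; destruct (Rle_or_lt c 0) as [|Hpos]; [assumption|].
  destruct (Hu c Hpos) as [N HN]; specialize (HN N (le_n N)); specialize (Hc N); lra.
Qed.

Lemma vanishing_of_cv_nonpos (u : nat -> R) (l : R) :
  Un_cv u l -> l <= 0 -> vanishing u.
Proof.
  intros Hu Hl g Hg; destruct (Hu g Hg) as [N HN].
  exists N; intros n Hn; specialize (HN n Hn); unfold Rdist in HN.
  apply Rabs_def2 in HN; lra.
Qed.

Lemma common_pos_bound (P : R -> nat -> Prop) (M : nat) :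
  (forall e e' k, 0 < e' -> e' <= e -> P e k -> P e' k) ->
  (forall k, (k < M)%nat -> exists e, 0 < e /\ P e k) ->
  exists e, 0 < e /\ forall k, (k < M)%nat -> P e k.
Proof.
  intros Hmono; induction M as [|M IH]; intros Hex.
  - exists 1; split; [lra | intros k Hk; lia].
  - destruct IH as [e1 [He1 H1]]; [intros k Hk; apply Hex; lia|].
    destruct (Hex M (Nat.lt_succ_diag_r M)) as [e2 [He2 H2]].
    assert (Hmin : 0 < Rmin e1 e2) by (apply Rmin_glb_lt; assumption).
    exists (Rmin e1 e2); split; [exact Hmin|].
    intros k Hk; destruct (Nat.eq_dec k M) as [->|Hne].
    + exact (Hmono e2 _ M Hmin (Rmin_r e1 e2) H2).
    + exact (Hmono e1 _ k Hmin (Rmin_l e1 e2) (H1 k ltac:(lia))).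
Qed.

Section UniformGap.

Variables (a b : nat -> R) (eps : R).
Hypothesis Heps : 0 < eps.
Hypothesis Hb_ge0 : forall n, 0 <= b n.
Hypothesis Hb_le : forall n, b n <= / 2 * a n.
Hypothesis Hb_lt : forall n, 0 < b n -> b n < / 2 * a n.
Hypothesis Ha : vanishing a.

Let gap_ok (delta : R) (i j : nat) : Prop :=
  / 2 * (a i + a j) < eps + delta -> b i + b j <= eps.

Let gap_ok_mono e e' i j : e' <= e -> gap_ok e i j -> gap_ok e' i j.
Proof. unfold gap_ok; intros Hle H Hlt; apply H; lra. Qed.

Lemma gap_ok_pair i j : exists delta, 0 < delta /\ gap_ok delta i j.
Proof.
  destruct (Rle_or_lt (b i + b j) eps) as [Hgood|Hbad].
  - exists 1; split; [lra | intros _; exact Hgood].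
  - exists (/ 2 * (a i + a j) - eps); split.
    + pose proof (Hb_le i); pose proof (Hb_le j); lra.
    + intros Hlt; lra.
Qed.

Lemma gap_ok_row i : exists delta, 0 < delta /\ forall j, gap_ok delta i j.
Proof.
  destruct (Rlt_or_le (b i) eps) as [Hsmall|Hlarge].
  - assert (Hb : vanishing b).
    { apply (vanishing_le b a); [|exact Ha].
      intro n; pose proof (Hb_le n); pose proof (Hb_ge0 n); lra. }
    destruct (Hb (eps - b i)) as [M HM]; [lra|].
    destruct (common_pos_bound (fun e j => gap_ok e i j) M) as [delta [Hdelta Hbelow]].
    + intros e e' j _; apply gap_ok_mono.
    + intros j _; apply gap_ok_pair.
    + exists delta; split; [exact Hdelta|]; intro j.
      destruct (Nat.lt_ge_cases j M) as [HjM|HMj].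
      * exact (Hbelow j HjM).
      * intros _; specialize (HM j HMj); lra.
  - (* b i >= eps > 0, so b i < a i / 2 and no pair through i can pass the test *)
    pose proof (Hb_lt i ltac:(lra)).
    exists (/ 2 * a i - eps); split; [lra|].
    intros j Hlt; pose proof (Hb_ge0 j); pose proof (Hb_le j); lra.
Qed.

Lemma uniform_gap :
  exists delta, 0 < delta /\ forall i j,
    / 2 * (a i + a j) < eps + delta -> b i + b j <= eps.
Proof.
  destruct (Ha eps Heps) as [N HN].
  destruct (common_pos_bound (fun e i => forall j, gap_ok e i j) N) as [delta [Hdelta Hrows]].
  - intros e e' i _ Hle H j; exact (gap_ok_mono e e' i j Hle (H j)).
  - intros i _; apply gap_ok_row.
  - exists delta; split; [exact Hdelta|]; intros i j.
    destruct (Nat.lt_ge_cases i N) as [Hi|Hi]; [exact (Hrows i Hi j)|].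
    destruct (Nat.lt_ge_cases j N) as [Hj|Hj].
    + intros Hlt; rewrite Rplus_comm; apply (Hrows j Hj i); lra.
    + intros _; pose proof (HN i Hi); pose proof (HN j Hj).
      pose proof (Hb_le i); pose proof (Hb_le j); lra.
Qed.

End UniformGap.

Section Metric.

Variables (X : Type) (d : X -> X -> R).
Hypothesis Hd : is_metric d.

Lemma dist_ge0 x y : 0 <= d x y.
Proof. apply Hd. Qed.

Lemma dist_xx x : d x x = 0.
Proof. apply Hd; reflexivity. Qed.

Lemma dist_eq0 x y : d x y = 0 -> x = y.
Proof. apply Hd. Qed.

Lemma dist_sym x y : d x y = d y x.
Proof. apply Hd. Qed.

Lemma dist_triangle x y z : d x z <= d x y + d y z.
Proof. apply Hd. Qed.

Lemma cv_step_vanishing (u : nat -> X) (l : X) :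
  seq_cv d u l -> vanishing (fun n => d (u n) (u (S n))).
Proof.
  intros Hu; apply (vanishing_le _ (fun n => d (u n) l + d (u (S n)) l)).
  - intro n; rewrite (dist_sym (u (S n))); apply dist_triangle.
  - exact (vanishing_add _ _ Hu (vanishing_shift _ Hu)).
Qed.

Section Contraction.

Variable T : X -> X.
Hypothesis HCM : forall x y : X, x <> y ->
  d (T x) (T y) < / 2 * (d x (T x) + d y (T y)).

Lemma dist_image_le x y : d (T x) (T y) <= / 2 * (d x (T x) + d y (T y)).
Proof.
  destruct (classic (x = y)) as [<-|Hxy]; [|exact (Rlt_le _ _ (HCM x y Hxy))].
  rewrite dist_xx; pose proof (dist_ge0 x (T x)); lra.
Qed.

Lemma displacement_le x : d (T x) (T (T x)) <= d x (T x).
Proof. pose proof (dist_image_le x (T x)); lra. Qed.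

Lemma displacement_lt x : 0 < d x (T x) -> d (T x) (T (T x)) < d x (T x).
Proof.
  intros Hpos; assert (Hx : x <> T x) by (intros E; rewrite <- E, dist_xx in Hpos; lra).
  pose proof (HCM x (T x) Hx); lra.
Qed.

Lemma fixed_point_unique w z : T w = w -> T z = z -> w = z.
Proof.
  intros Hw Hz; apply dist_eq0.
  pose proof (dist_image_le w z) as H; rewrite Hw, Hz, !dist_xx in H.
  pose proof (dist_ge0 w z); lra.
Qed.

Lemma dist_to_fixed_le x z : T z = z -> d (T x) z <= / 2 * d x (T x).
Proof.
  intros Hz; pose proof (dist_image_le x z) as H; rewrite Hz, dist_xx in H; lra.
Qed.

Lemma dist_to_fixed_lt x z : T z = z -> 0 < d (T x) z -> d (T x) z < / 2 * d x (T x).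
Proof.
  intros Hz Hpos; assert (Hxz : x <> z) by (intros ->; rewrite Hz, dist_xx in Hpos; lra).
  pose proof (HCM x z Hxz) as H; rewrite Hz, dist_xx in H; lra.
Qed.

Lemma fixed_of_approx_fixed (u : nat -> X) (l : X) :
  seq_cv d u l -> vanishing (fun n => d (u n) (T (u n))) -> T l = l.
Proof.
  intros Hu Hdisp; symmetry; apply dist_eq0.
  assert (Hbound : forall n, / 3 * d l (T l) <= d (u n) l + d (u n) (T (u n))).
  { intro n.
    pose proof (dist_triangle l (u n) (T l)); pose proof (dist_triangle (u n) (T (u n)) (T l)).
    pose proof (dist_image_le (u n) l); pose proof (dist_ge0 (u n) l).
    rewrite (dist_sym l (u n)) in *; lra. }
  pose proof (vanishing_lower_bound _ _ (vanishing_add _ _ Hu Hdisp) Hbound).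
  pose proof (dist_ge0 l (T l)); lra.
Qed.

Section OrbitCondition.

Variable x : X.
Hypothesis Horbit : forall eps : R, 0 < eps -> exists delta : R, 0 < delta /\
  forall i j : nat,
    / 2 * (d (iterate T i x) (iterate T (S i) x)
           + d (iterate T j x) (iterate T (S j) x)) < eps + delta ->
    d (iterate T (S i) x) (iterate T (S j) x) <= eps.

Lemma orbit_step_vanishing :
  vanishing (fun n => d (iterate T n x) (iterate T (S n) x)).
Proof.
  set (a n := d (iterate T n x) (iterate T (S n) x)).
  assert (Hdec : Un_decreasing a) by (intro n; apply displacement_le).
  assert (Hlb : has_lb a).
  { exists 0; intros y [n ->]; unfold opp_seq; pose proof (dist_ge0 (iterate T n x) (iterate T (S n) x)).
    unfold a; lra. }
  destruct (decreasing_cv a Hdec Hlb) as [l Hl].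
  pose proof (decreasing_ineq a l Hdec Hl) as Hge.
  apply (vanishing_of_cv_nonpos a l Hl).
  destruct (Rle_or_lt l 0) as [|Hlpos]; [assumption|exfalso].
  destruct (Horbit l Hlpos) as [delta [Hdelta Hgap]].
  destruct (Hl delta Hdelta) as [N HN]; specialize (HN N (le_n N)).
  unfold Rdist in HN; apply Rabs_def2 in HN.
  (* the pair (N, N+1) passes the test, so the displacement at N+1 equals l *)
  assert (HS : a (S N) <= l).
  { apply (Hgap N (S N)); fold (a N) (a (S N)); pose proof (Hdec N); lra. }
  assert (Hlt : a (S (S N)) < a (S N)).
  { apply displacement_lt; change (0 < a (S N)); pose proof (Hge (S N)); lra. }
  pose proof (Hge (S (S N))); lra.
Qed.

Lemma orbit_cauchy : cauchy_seq d (fun n => iterate T n x).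
Proof.
  intros g Hg.
  destruct (Horbit (g / 2)) as [delta [Hdelta Hgap]]; [lra|].
  destruct (orbit_step_vanishing (g / 2)) as [N HN]; [lra|].
  exists (S N); intros [|i] [|j] Hi Hj; try lia.
  assert (d (iterate T (S i) x) (iterate T (S j) x) <= g / 2); [|lra].
  apply Hgap; pose proof (HN i ltac:(lia)); pose proof (HN j ltac:(lia)); lra.
Qed.

Lemma orbit_cv_fixed_point :
  complete_metric d -> exists z, T z = z /\ seq_cv d (fun n => iterate T n x) z.
Proof.
  intros Hcomplete; destruct (Hcomplete _ orbit_cauchy) as [z Hz].
  exists z; split; [|exact Hz].
  exact (fixed_of_approx_fixed _ z Hz orbit_step_vanishing).
Qed.

End OrbitCondition.

Lemma orbit_condition_of_cv x z :
  T z = z -> seq_cv d (fun n => iterate T n x) z ->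
  forall eps : R, 0 < eps -> exists delta : R, 0 < delta /\
  forall i j : nat,
    / 2 * (d (iterate T i x) (iterate T (S i) x)
           + d (iterate T j x) (iterate T (S j) x)) < eps + delta ->
    d (iterate T (S i) x) (iterate T (S j) x) <= eps.
Proof.
  intros Hz Hcv eps Heps.
  destruct (uniform_gap (fun n => d (iterate T n x) (iterate T (S n) x))
              (fun n => d (iterate T (S n) x) z) eps Heps) as [delta [Hdelta Hgap]].
  - intro n; apply dist_ge0.
  - intro n; exact (dist_to_fixed_le _ z Hz).
  - intro n; exact (dist_to_fixed_lt _ z Hz).
  - exact (cv_step_vanishing _ z Hcv).
  - exists delta; split; [exact Hdelta|]; intros i j Hlt.
    pose proof (Hgap i j Hlt); pose proof (dist_triangle (iterate T (S i) x) z (iterate T (S j) x)).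
    rewrite (dist_sym z) in *; lra.
Qed.

End Contraction.

End Metric.

Theorem theorem3p1 (X : Type) (d : X -> X -> R) (T : X -> X)
  (Hne : inhabited X) (Hmetric : is_metric d) (Hcomplete : complete_metric d)
  (HCM : forall x y : X, x <> y ->
     d (T x) (T y) < / 2 * (d x (T x) + d y (T y))) :
  (forall (x : X) (eps : R), 0 < eps -> exists delta : R, 0 < delta /\
     forall i j : nat,
       / 2 * (d (iterate T i x) (iterate T (S i) x)
              + d (iterate T j x) (iterate T (S j) x)) < eps + delta ->
       d (iterate T (S i) x) (iterate T (S j) x) <= eps)
  <->
  (exists z : X, T z = z /\ (forall w : X, T w = w -> w = z) /\
     forall x : X, seq_cv d (fun n => iterate T n x) z).
Proof.
  pose proof (fixed_point_unique X d Hmetric T HCM) as Huniq.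
  pose proof (orbit_cv_fixed_point X d Hmetric T HCM) as Hlimit.
  split.
  - intros Hcond; destruct Hne as [x0].
    destruct (Hlimit x0 (Hcond x0) Hcomplete) as [z [Hz _]].
    exists z; split; [exact Hz|split].
    + intros w Hw; exact (Huniq w z Hw Hz).
    + intro x; destruct (Hlimit x (Hcond x) Hcomplete) as [l [Hl Hcv]].
      rewrite <- (Huniq l z Hl Hz); exact Hcv.
  - intros [z [Hz [_ Hcv]]] x.
    exact (orbit_condition_of_cv X d Hmetric T HCM x z Hz (Hcv x)).
Qed.
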